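(* Let $\Omega\subset\mathbb{C}$ be a bounded domain with smooth boundary, let $p_1,\dots,p_n\in\Omega$, and let $u$ be a solution of $\Delta u=e^{2u}$ in $\Omega-\{p_1,\dots,p_n\}$ with $u(x)\to+\infty$ as $x$ approaches $\partial\Omega$ or any $p_l$. Suppose that for each $l=1,\dots,n$, $$u(x)\ge-\log\Bigl(-r_l\,|x-p_l|\,\log\Bigl(\frac{|x-p_l|}{r_l}\Bigr)\Bigr)$$ near $p_l$, where $r_l>0$ is such that $B_{r_l}(p_l)\supset\Omega$. Then there exists a constant $C$ such that $$\Bigl|u(x)+\log\bigl(-|x-p_l|\log|x-p_l|\bigr)\Bigr|<C$$ in a neighborhood of $p_l$, for all $l=1,\dots,n$.
   Context: $\Delta$ is the Euclidean Laplacian; $B_r(p)$ is the open Euclidean disk of radius $r$ centered at $p$. *)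

From Stdlib Require Import Reals.
From Coquelicot Require Import Coquelicot.
Open Scope R_scope.

Definition pt := (R * R)%type.

Definition dist2 (x y : pt) : R :=
  sqrt ((fst x - fst y) ^ 2 + (snd x - snd y) ^ 2).

Definition dx (f : pt -> R) (z : pt) : R := Derive (fun t => f (t, snd z)) (fst z).
Definition dy (f : pt -> R) (z : pt) : R := Derive (fun t => f (fst z, t)) (snd z).

Definition Lap (f : pt -> R) (z : pt) : R := dx (dx f) z + dy (dy f) z.

Fixpoint Ck (k : nat) (U : pt -> Prop) (f : pt -> R) : Prop :=
  match k with
  | O => forall z, U z -> continuous f z
  | S k' =>
      (forall z, U z -> continuous f z) /\
      (forall z, U z -> ex_derive (fun t => f (t, snd z)) (fst z) /\
                        ex_derive (fun t => f (fst z, t)) (snd z)) /\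
      Ck k' U (dx f) /\ Ck k' U (dy f)
  end.

Definition smooth_fn (f : pt -> R) : Prop := forall k, Ck k (fun _ => True) f.

Definition open_pset (U : pt -> Prop) : Prop :=
  forall z, U z -> exists e, 0 < e /\ forall w, dist2 w z < e -> U w.

Definition connected_open (U : pt -> Prop) : Prop :=
  ~ exists A B : pt -> Prop, open_pset A /\ open_pset B /\
      (forall z, U z -> A z \/ B z) /\ (forall z, U z -> A z -> B z -> False) /\
      (exists z, U z /\ A z) /\ (exists z, U z /\ B z).

Definition plane_domain (U : pt -> Prop) : Prop :=
  open_pset U /\ connected_open U /\ exists z, U z.

Definition bounded_set (U : pt -> Prop) : Prop :=
  exists M, forall z, U z -> dist2 z (0, 0) <= M.

Definition bdry (U : pt -> Prop) (q : pt) : Prop :=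
  ~ U q /\ forall e, 0 < e -> exists z, U z /\ dist2 z q < e.

Definition smooth_boundary (U : pt -> Prop) : Prop :=
  forall q, bdry U q ->
    exists r rho, 0 < r /\ smooth_fn rho /\ (dx rho q <> 0 \/ dy rho q <> 0) /\
      forall z, dist2 z q < r -> (U z <-> rho z < 0).

Definition tends_pinfty_at (D : pt -> Prop) (u : pt -> R) (q : pt) : Prop :=
  forall M, exists d, 0 < d /\ forall x, D x -> dist2 x q < d -> M < u x.

From Stdlib Require Import Reals Lra Lia Classical.
From Coquelicot Require Import Coquelicot.
From mathcomp Require all_boot all_algebra all_classical all_reals all_analysis.
From mathcomp Require Rstruct Rstruct_topology.
Open Scope R_scope.

(** The argument compares [u] with explicit radial supersolutions of [Δφ = e^(2φ)]: at an
    interior maximum of [u - φ] one has [e^(2u) <= Δu <= Δφ <= e^(2φ)], hence [u <= φ] there.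
    Comparing with the hyperbolic metric of a disk of radius [R] bounds [u] by [ln (2/R)] at its
    centre. Near a puncture [p], [φ_eps = -ln(|x-p| ln(rho/|x-p|)) + eps ln(rho/|x-p|)] is a
    supersolution; on a thin annulus around [p] it dominates [u] on the outer circle by the choice
    of the outer radius, and on the inner circle because the disk bound only grows like
    [-ln|x-p|] there. Letting [eps -> 0] gives [u <= -ln(|x-p| ln(rho/|x-p|))], and the assumed
    lower bound differs from this by a bounded amount as [x -> p]. *)

Definition sqdist (x y : pt) : R := (fst x - fst y) ^ 2 + (snd x - snd y) ^ 2.

Lemma sqdist_ge0 x y : 0 <= sqdist x y.
Proof.
unfold sqdist; pose proof (pow2_ge_0 (fst x - fst y)); pose proof (pow2_ge_0 (snd x - snd y)).
lra.
Qed.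

Lemma sqdist_diag x : sqdist x x = 0.
Proof. unfold sqdist; ring. Qed.

Lemma sqdist_gt0 x y : x <> y -> 0 < sqdist x y.
Proof.
intros Hxy; destruct (Rle_lt_dec (sqdist x y) 0) as [H0|H0]; [exfalso|exact H0].
unfold sqdist in H0; apply Hxy; destruct x as [x1 x2], y as [y1 y2]; simpl in *.
rewrite !Rmult_1_r in H0.
pose proof (Rle_0_sqr (x1 - y1)); pose proof (Rle_0_sqr (x2 - y2)); unfold Rsqr in *.
assert (E1 : (x1 - y1) * (x1 - y1) = 0) by lra.
assert (E2 : (x2 - y2) * (x2 - y2) = 0) by lra.
apply Rmult_integral in E1, E2; f_equal; lra.
Qed.

Lemma sqdist_dist2 x y : sqdist x y = dist2 x y ^ 2.
Proof. unfold dist2; rewrite pow2_sqrt; [reflexivity|apply sqdist_ge0]. Qed.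

Lemma dist2_ge0 x y : 0 <= dist2 x y.
Proof. apply sqrt_pos. Qed.

Lemma dist2_sym x y : dist2 x y = dist2 y x.
Proof. unfold dist2; f_equal; ring. Qed.

Lemma dist2_triangle x y z : dist2 x z <= dist2 x y + dist2 y z.
Proof.
pose proof (triangle (fst z) (snd z) (fst x) (snd x) (fst y) (snd y)) as H.
unfold dist_euc, Rsqr in H; unfold dist2.
replace ((fst x - fst z) ^ 2 + (snd x - snd z) ^ 2)
  with ((fst z - fst x) * (fst z - fst x) + (snd z - snd x) * (snd z - snd x)) by ring.
replace ((fst x - fst y) ^ 2 + (snd x - snd y) ^ 2)
  with ((fst y - fst x) * (fst y - fst x) + (snd y - snd x) * (snd y - snd x)) by ring.
replace ((fst y - fst z) ^ 2 + (snd y - snd z) ^ 2)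
  with ((fst z - fst y) * (fst z - fst y) + (snd z - snd y) * (snd z - snd y)) by ring.
lra.
Qed.

Lemma ln_sqrt x : 0 < x -> ln (sqrt x) = ln x / 2.
Proof.
intros Hx.
rewrite <- (sqrt_sqrt x) at 2 by lra.
rewrite ln_mult by (apply sqrt_lt_R0; lra); field.
Qed.

Lemma continuous_sqdist c z : continuous (fun w => sqdist w c) z.
Proof.
assert (Hsq : forall t : R, continuous (fun t => t ^ 2) t)
  by (intros t; apply (@ex_derive_continuous R_AbsRing R_NormedModule); auto_derive; auto).
apply (continuous_plus (fun w => (fst w - fst c) ^ 2) (fun w => (snd w - snd c) ^ 2)).
- apply (continuous_comp (fun w : pt => fst w - fst c) (fun t => t ^ 2)); [|apply Hsq].
  apply (continuous_minus (fun w : pt => fst w)); [apply continuous_fst|apply continuous_const].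
- apply (continuous_comp (fun w : pt => snd w - snd c) (fun t => t ^ 2)); [|apply Hsq].
  apply (continuous_minus (fun w : pt => snd w)); [apply continuous_snd|apply continuous_const].
Qed.

Lemma continuous_box (f : pt -> R) z e : continuous f z -> 0 < e ->
  exists d, 0 < d /\ forall w, Rabs (fst w - fst z) < d -> Rabs (snd w - snd z) < d ->
    Rabs (f w - f z) < e.
Proof.
intros Hf He.
destruct (proj1 (filterlim_locally f (f z)) Hf (mkposreal e He)) as [d Hd].
exists d; split; [apply cond_pos|intros w H1 H2; apply (Hd w); split; assumption].
Qed.

Lemma sqdist_shift c r : sqdist (fst c + r, snd c) c = r ^ 2.
Proof. unfold sqdist; simpl; ring. Qed.

Lemma sqdist_box z c h : sqdist z c <= h ->
  Rabs (fst z - fst c) <= sqrt h /\ Rabs (snd z - snd c) <= sqrt h.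
Proof.
unfold sqdist; intros H.
pose proof (pow2_ge_0 (fst z - fst c)); pose proof (pow2_ge_0 (snd z - snd c)).
split; [rewrite <- (sqrt_pow2 (Rabs (fst z - fst c))) by apply Rabs_pos
       |rewrite <- (sqrt_pow2 (Rabs (snd z - snd c))) by apply Rabs_pos];
  apply sqrt_le_1_alt; rewrite pow2_abs; lra.
Qed.

(* Inside this section [%R] is MathComp's ring scope; Stdlib's real scope is [%coqR]. *)
Section Extreme_value_on_annuli.
Import all_boot all_algebra all_classical all_reals all_analysis Rstruct Rstruct_topology.
Import Num.Theory.
Local Open Scope classical_set_scope.

Let continuous_at_of_continuous (f : pt -> R) z :
  Continuity.continuous f z -> {for z, continuous f}.
Proof.
move=> Hf; apply/(@cvgrPdist_lt _ R^o) => e /RltP e0.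
have [d [/RltP d0 Hd]] := continuous_box _ _ _ Hf e0.
exists (ball z.1 d, ball z.2 d); first by split; apply: nbhsx_ballx.
case=> w1 w2 [/= b1 b2]; move: b1 b2; rewrite /ball /= => b1 b2.
rewrite distrC -RabsE; apply/RltP; apply: (Hd (w1, w2)) => /=.
  by apply/RltP; rewrite RabsE distrC.
by apply/RltP; rewrite RabsE distrC.
Qed.

Lemma annulus_max_exists (f : pt -> R) (c : pt) (lo hi : R) : (0 <= lo <= hi)%coqR ->
  (forall z, (lo <= sqdist z c <= hi)%coqR -> Continuity.continuous f z) ->
  exists z0, (lo <= sqdist z0 c <= hi)%coqR /\
    forall z, (lo <= sqdist z c <= hi)%coqR -> (f z <= f z0)%coqR.
Proof.
move=> [H0 H1] Hf.
pose A := (fun z => sqdist z c) @^-1` ([set x | (lo <= x)%R] `&` [set x | (x <= hi)%R]).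
have A0 : A !=set0.
  exists (c.1 + sqrt lo, c.2)%coqR; rewrite /A /= sqdist_shift pow2_sqrt //.
  by split; apply/RleP => //; apply: Rle_refl.
have cA : compact A.
  pose B : set pt := [set` (`[c.1 - sqrt hi, c.1 + sqrt hi]%R)] `*`
                     [set` (`[c.2 - sqrt hi, c.2 + sqrt hi]%R)].
  apply: (@subclosed_compact _ A B).
  - apply: preimage_closed.
      by move=> z _; apply: continuous_at_of_continuous; apply: continuous_sqdist.
    by apply: closedI; [apply: closed_ge | apply: closed_le].
  - by apply: compact_setX; apply: segment_compact.
  - move=> z [_ /RleP /sqdist_box [/Rabs_le_between' [a1 a2] /Rabs_le_between' [a3 a4]]].
    by rewrite /B /= !in_itv /=; split; apply/andP; split; apply/RleP.
have cf : {within A, continuous f}.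
  apply: continuous_in_subspaceT => z /set_mem [/RleP z1 /RleP z2].
  by apply: continuous_at_of_continuous; apply: Hf.
have [z0 /set_mem [/RleP z1 /RleP z2] Hz] := compact_EVT_max A0 cA cf.
exists z0; split => // z [a1 a2].
by apply/RleP; apply: Hz; apply/mem_set; split; apply/RleP.
Qed.

End Extreme_value_on_annuli.

Lemma local_max_second_derivative_le0 (g g' : R -> R) x0 delta L : 0 < delta ->
  (forall t, Rabs (t - x0) < delta -> is_derive g t (g' t)) ->
  is_derive g' x0 L ->
  (forall t, Rabs (t - x0) < delta -> g t <= g x0) -> L <= 0.
Proof.
intros Hdelta Hg Hg' Hmax.
assert (Hcrit : g' x0 = 0).
{ assert (Hx0 : is_derive g x0 (g' x0)) by (apply Hg; rewrite Rminus_diag, Rabs_R0; lra).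
  pose (pr := ex_derive_Reals_0 g x0 (ex_intro _ _ Hx0)).
  rewrite <- (is_derive_unique g x0 _ Hx0), <- (Derive_Reals g x0 pr).
  apply (deriv_maximum g (x0 - delta) (x0 + delta)); try lra.
  intros t H1 H2; apply Hmax, Rabs_def1; lra. }
apply Rnot_lt_le; intros HL.
apply is_derive_Reals in Hg'.
destruct (Hg' (L / 2) ltac:(lra)) as [e He].
set (h := Rmin e delta / 2).
assert (Hh : 0 < h < Rmin e delta)
  by (pose proof (Rmin_pos e delta (cond_pos e) Hdelta); unfold h; lra).
pose proof (Rmin_l e delta); pose proof (Rmin_r e delta).
assert (Hincr : forall t, x0 < t <= x0 + h -> 0 < g' t).
{ intros t Ht.
  specialize (He (t - x0) ltac:(lra) ltac:(rewrite Rabs_pos_eq; lra)).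
  replace (x0 + (t - x0)) with t in He by ring; rewrite Hcrit, Rminus_0_r in He.
  apply Rabs_def2 in He; destruct He as [_ He].
  assert (0 < g' t / (t - x0)) by lra.
  replace (g' t) with (g' t / (t - x0) * (t - x0)) by (field; lra).
  apply Rmult_lt_0_compat; lra. }
destruct (MVT_cor2 g g' x0 (x0 + h)) as [c [Hc Hcin]]; [lra| |].
- intros c Hc; apply is_derive_Reals, Hg, Rabs_def1; lra.
- assert (g (x0 + h) <= g x0) by (apply Hmax, Rabs_def1; lra).
  pose proof (Hincr c ltac:(lra)); nra.
Qed.

Lemma is_derive_radial_line (Phi Phi' s : R -> R) a k t :
  (forall t, s t = (t - a) ^ 2 + k) -> is_derive Phi (s t) (Phi' (s t)) ->
  is_derive (fun t => Phi (s t)) t (2 * (t - a) * Phi' (s t)).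
Proof.
intros Hs H.
assert (Hin : is_derive s t (2 * (t - a))).
{ apply (is_derive_ext (fun t => (t - a) ^ 2 + k)); [intros; rewrite Hs; reflexivity|].
  auto_derive; auto; ring. }
exact (is_derive_comp Phi s t _ _ H Hin).
Qed.

Lemma is_derive_radial_line_deriv (Phi' Phi'' s : R -> R) a k t :
  (forall t, s t = (t - a) ^ 2 + k) -> is_derive Phi' (s t) (Phi'' (s t)) ->
  is_derive (fun t => 2 * (t - a) * Phi' (s t)) t
    (2 * Phi' (s t) + 4 * (t - a) ^ 2 * Phi'' (s t)).
Proof.
intros Hs H.
assert (Hlin : is_derive (fun t => 2 * (t - a)) t 2) by (auto_derive; auto; ring).
pose proof (is_derive_mult _ _ t _ _ Hlin (is_derive_radial_line Phi' Phi'' s a k t Hs H)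
              Rmult_comm) as Hm.
replace (2 * Phi' (s t) + 4 * (t - a) ^ 2 * Phi'' (s t))
  with (plus (mult 2 (Phi' (s t))) (mult (2 * (t - a)) (2 * (t - a) * Phi'' (s t))))
  by (unfold plus, mult; simpl; ring).
exact Hm.
Qed.

Lemma radial_line_max_second (v v' s Phi Phi' Phi'' : R -> R) (a k t0 delta V : R) :
  0 < delta -> (forall t, s t = (t - a) ^ 2 + k) ->
  (forall t, Rabs (t - t0) < delta ->
     is_derive v t (v' t) /\ is_derive Phi (s t) (Phi' (s t)) /\
     v t - Phi (s t) <= v t0 - Phi (s t0)) ->
  is_derive v' t0 V -> is_derive Phi' (s t0) (Phi'' (s t0)) ->
  V <= 2 * Phi' (s t0) + 4 * (t0 - a) ^ 2 * Phi'' (s t0).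
Proof.
intros Hdelta Hs Hmax HV HPhi'.
cut (V - (2 * Phi' (s t0) + 4 * (t0 - a) ^ 2 * Phi'' (s t0)) <= 0); [lra|].
apply (local_max_second_derivative_le0 (fun t => v t - Phi (s t))
         (fun t => v' t - 2 * (t - a) * Phi' (s t)) t0 delta); [exact Hdelta| | |].
- intros t Ht; destruct (Hmax t Ht) as [Hv [HPhi _]].
  apply (is_derive_minus _ _ t _ _ Hv), (is_derive_radial_line _ _ _ _ _ _ Hs HPhi).
- apply (is_derive_minus _ _ t0 _ _ HV), (is_derive_radial_line_deriv _ _ _ _ _ _ Hs HPhi').
- intros t Ht; apply (Hmax t Ht).
Qed.

(** With [s = |x - c|^2], the Laplacian of [Phi (s x)] is [4 s Phi''(s) + 4 Phi'(s)], so this says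
    that [x |-> Phi (|x - c|^2)] is a supersolution of [Δφ = e^(2φ)] on the annulus [a < s < b]. *)
Definition radial_supersolution (Phi Phi' Phi'' : R -> R) (a b : R) : Prop :=
  forall s, a < s < b ->
    is_derive Phi s (Phi' s) /\ is_derive Phi' s (Phi'' s) /\
    4 * s * Phi'' s + 4 * Phi' s <= exp (2 * Phi s).

Lemma exists_small_ln (K m : R) : 0 < m -> exists t, 0 < t <= m /\ ln t < K.
Proof.
intros Hm.
exists (Rmin m (exp K / 2)).
pose proof (exp_pos K); pose proof (Rmin_l m (exp K / 2)); pose proof (Rmin_r m (exp K / 2)).
assert (Ht : 0 < Rmin m (exp K / 2)) by (apply Rmin_pos; lra).
split; [lra|].
rewrite <- (ln_exp K) at 2; apply ln_increasing; lra.
Qed.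

(** With [s = |x|^2], the logarithm of the density [2 R0 / (R0^2 - |x|^2)] of the hyperbolic
    metric of the disk of radius [R0]: an exact solution that blows up on the circle. *)
Definition poincare_profile (R0 s : R) : R := ln (2 * R0) - ln (R0 ^ 2 - s).

Lemma poincare_profile_supersolution (R0 a : R) : 0 < R0 ->
  radial_supersolution (poincare_profile R0) (fun s => / (R0 ^ 2 - s))
    (fun s => / (R0 ^ 2 - s) ^ 2) a (R0 ^ 2).
Proof.
intros HR s Hs; unfold poincare_profile.
split; [|split].
- auto_derive; [lra|]; field; lra.
- auto_derive; [lra|]; field; lra.
- right.
  replace (2 * (ln (2 * R0) - ln (R0 ^ 2 - s)))
    with (ln (2 * R0) + ln (2 * R0) - ln (R0 ^ 2 - s) - ln (R0 ^ 2 - s)) by ring.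
  unfold Rminus; rewrite !exp_plus, !exp_Ropp, !exp_ln by nra.
  field; lra.
Qed.

Lemma exists_linear_beats_ln (eps K T0 : R) : 0 < eps ->
  exists T, T0 < T /\ K < eps * T - ln T.
Proof.
intros Heps.
assert (H4 : 0 < 4 / eps) by (apply Rdiv_lt_0_compat; lra).
set (q := 4 / eps + Rabs K + Rabs T0 + 1).
assert (Hq : Rabs K + Rabs T0 + 1 <= q) by (unfold q; lra).
assert (Hq4 : 4 <= eps * q).
{ assert (eps * (4 / eps) = 4) by (field; lra).
  pose proof (Rabs_pos K); pose proof (Rabs_pos T0); unfold q; nra. }
assert (Hlnq : ln q < q).
{ pose proof (Rabs_pos K); pose proof (Rabs_pos T0).
  rewrite <- (ln_exp q) at 2; apply ln_increasing; [lra|].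
  pose proof (exp_ineq1_le q); lra. }
pose proof (Rle_abs K); pose proof (Rle_abs T0); pose proof (Rabs_pos K); pose proof (Rabs_pos T0).
exists (q ^ 2).
rewrite ln_pow by lra; simpl INR.
split; nra.
Qed.

Definition log_ratio (rho s : R) : R := ln rho - ln s / 2.

(** With [s = |x - p|^2] and [eps = 0], this is the logarithm of the density
    [1 / (|x - p| ln (rho / |x - p|))] of the complete hyperbolic metric of the punctured disk
    of radius [rho]; the [eps]-term makes it blow up faster at [p]. *)
Definition cusp_profile (rho eps s : R) : R :=
  - (ln s / 2) - ln (log_ratio rho s) + eps * log_ratio rho s.

Definition cusp_profile' (rho eps s : R) : R :=
  - / (2 * s) + / (2 * s * log_ratio rho s) - eps / (2 * s).

Definition cusp_profile'' (rho eps s : R) : R :=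
  / (2 * s ^ 2) - (2 * log_ratio rho s - 1) / (4 * s ^ 2 * log_ratio rho s ^ 2)
  + eps / (2 * s ^ 2).

Definition cusp_level (rho T : R) : R := exp (2 * (ln rho - T)).

Lemma log_ratio_pos rho s : 0 < rho -> 0 < s < rho ^ 2 -> 0 < log_ratio rho s.
Proof.
intros Hrho Hs; unfold log_ratio.
assert (ln s < ln (rho ^ 2)) by (apply ln_increasing; lra).
rewrite ln_pow in H by lra; simpl INR in H; lra.
Qed.

Lemma cusp_profile_supersolution rho eps : 0 < rho -> 0 <= eps ->
  radial_supersolution (cusp_profile rho eps) (cusp_profile' rho eps) (cusp_profile'' rho eps)
    0 (rho ^ 2).
Proof.
intros Hrho Heps s Hs.
pose proof (log_ratio_pos rho s Hrho Hs) as HL.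
unfold cusp_profile, cusp_profile', cusp_profile'' in *; unfold log_ratio in *.
split; [|split].
- auto_derive; [repeat split; try exact I; unfold Rdiv in *; lra|].
  field; repeat split; intro; unfold Rdiv in *; lra.
- auto_derive;
    [repeat split; try exact I; try (intro; unfold Rdiv in *; nra); unfold Rdiv in *; nra|].
  field; repeat split; intro; unfold Rdiv in *; nra.
- set (L := ln rho - ln s / 2) in *; clearbody L.
  replace (4 * s * (/ (2 * s ^ 2) - (2 * L - 1) / (4 * s ^ 2 * L ^ 2) + eps / (2 * s ^ 2)) +
           4 * (- / (2 * s) + / (2 * s * L) - eps / (2 * s)))
    with (/ (s * L ^ 2)) by (field; lra).
  replace (2 * (- (ln s / 2) - ln L + eps * L)) with (- (ln s + ln L + ln L) + 2 * eps * L)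
    by field.
  rewrite exp_plus, exp_Ropp, !exp_plus, !exp_ln by lra.
  assert (1 <= exp (2 * eps * L)) by (pose proof (exp_ineq1_le (2 * eps * L)); nra).
  assert (0 < / (s * L * L)) by (apply Rinv_0_lt_compat; repeat apply Rmult_lt_0_compat; lra).
  replace (/ (s * L ^ 2)) with (/ (s * L * L) * 1) by (field; lra).
  apply Rmult_le_compat_l; lra.
Qed.

Lemma ln_cusp_level rho T : ln (cusp_level rho T) / 2 = ln rho - T.
Proof. unfold cusp_level; rewrite ln_exp; field. Qed.

Lemma cusp_profile_level rho eps T :
  cusp_profile rho eps (cusp_level rho T) = T - ln rho - ln T + eps * T.
Proof.
unfold cusp_profile, log_ratio; rewrite ln_cusp_level.
replace (ln rho - (ln rho - T)) with T by ring; ring.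
Qed.

Lemma cusp_level_log_ratio rho s : 0 < s -> cusp_level rho (log_ratio rho s) = s.
Proof.
intros Hs; unfold cusp_level, log_ratio.
replace (2 * (ln rho - (ln rho - ln s / 2))) with (ln s) by field.
apply exp_ln, Hs.
Qed.

Lemma cusp_level_lt rho T T' : T' < T -> cusp_level rho T < cusp_level rho T'.
Proof. intros H; apply exp_increasing; lra. Qed.

Lemma cusp_level_0 rho : 0 < rho -> cusp_level rho 0 = rho ^ 2.
Proof.
intros Hrho; unfold cusp_level.
replace (2 * (ln rho - 0)) with (ln rho + ln rho) by ring.
rewrite exp_plus, exp_ln by lra; ring.
Qed.

Lemma ln_cusp_upper rho d U : 0 < rho < 1 -> 0 < d < rho ^ 2 ->
  U <= - ln d - ln (ln rho - ln d) -> U + ln (- d * ln d) <= ln 2.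
Proof.
intros Hrho Hd HU.
assert (Hlnrho : ln rho < 0) by (rewrite <- ln_1; apply ln_increasing; lra).
assert (Hlnd : ln d < 2 * ln rho).
{ replace (2 * ln rho) with (ln (rho ^ 2)) by (rewrite ln_pow by lra; simpl; ring).
  apply ln_increasing; lra. }
replace (- d * ln d) with (d * - ln d) by ring.
rewrite ln_mult by lra.
assert (ln (- ln d) <= ln 2 + ln (ln rho - ln d)) by (rewrite <- ln_mult by lra; apply ln_le; lra).
lra.
Qed.

Lemma ln_cusp_lower r d U : 0 < r -> 0 < d < 1 -> d < r -> d < / r ->
  - ln (- r * d * ln (d / r)) <= U -> - ln r - ln 2 <= U + ln (- d * ln d).
Proof.
intros Hr Hd Hdr Hdr' HU.
assert (Hlnd : ln d < 0) by (rewrite <- ln_1; apply ln_increasing; lra).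
assert (Hlnr : ln d < ln r) by (apply ln_increasing; lra).
assert (Hlnr' : ln d < - ln r) by (rewrite <- ln_Rinv by lra; apply ln_increasing; lra).
unfold Rdiv in HU; rewrite (ln_mult d (/ r)), ln_Rinv in HU by (try apply Rinv_0_lt_compat; lra).
replace (- r * d * (ln d + - ln r)) with (r * (d * (ln r - ln d))) in HU by ring.
rewrite !ln_mult in HU by nra.
replace (- d * ln d) with (d * - ln d) by ring.
rewrite ln_mult by lra.
assert (ln (ln r - ln d) <= ln 2 + ln (- ln d)) by (rewrite <- ln_mult by lra; apply ln_le; lra).
lra.
Qed.

Lemma finite_positive_lower_bound (n : nat) (P : nat -> Prop) (f : nat -> R) :
  (forall j, (j < n)%nat -> P j -> 0 < f j) ->
  exists m, 0 < m /\ forall j, (j < n)%nat -> P j -> m <= f j.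
Proof.
induction n as [|n IH]; intros Hpos.
- exists 1; split; [lra|intros j Hj; lia].
- destruct IH as [m [Hm Hmin]]; [intros j Hj; apply Hpos; lia|].
  destruct (classic (P n)) as [Pn|Pn].
  + pose proof (Hpos n ltac:(lia) Pn).
    exists (Rmin m (f n)); split; [apply Rmin_pos; lra|intros j Hj HPj].
    destruct (Nat.eq_dec j n) as [->|Hjn]; [apply Rmin_r|].
    pose proof (Rmin_l m (f n)); pose proof (Hmin j ltac:(lia) HPj); lra.
  + exists m; split; [exact Hm|intros j Hj HPj].
    destruct (Nat.eq_dec j n) as [->|Hjn]; [contradiction|apply Hmin; [lia|exact HPj]].
Qed.

Lemma finite_common_bound (n : nat) (Q : nat -> R -> Prop) :
  (forall l C C', C <= C' -> Q l C -> Q l C') ->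
  (forall l, (l < n)%nat -> exists C, Q l C) ->
  exists C, forall l, (l < n)%nat -> Q l C.
Proof.
intros Hmono; induction n as [|n IH]; intros HQ.
- exists 0; intros l Hl; lia.
- destruct IH as [C HC]; [intros l Hl; apply HQ; lia|].
  destruct (HQ n ltac:(lia)) as [Cn HCn].
  exists (Rmax C Cn); intros l Hl.
  destruct (Nat.eq_dec l n) as [->|Hln].
  + apply (Hmono n Cn); [apply Rmax_r|exact HCn].
  + apply (Hmono l C); [apply Rmax_l|apply HC; lia].
Qed.

Lemma punctured_disk_in_domain (Omega D : pt -> Prop) (n : nat) (p : nat -> pt) (l : nat) :
  open_pset Omega -> Omega (p l) ->
  (forall x, D x <-> Omega x /\ forall j, (j < n)%nat -> x <> p j) ->
  exists rho0, 0 < rho0 /\ forall z, 0 < dist2 z (p l) < rho0 -> D z.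
Proof.
intros Hopen Hpl HD.
destruct (Hopen (p l) Hpl) as [e [He HeOmega]].
destruct (finite_positive_lower_bound n (fun j => p j <> p l) (fun j => dist2 (p j) (p l)))
  as [m [Hm Hmin]].
{ intros j _ Hj; pose proof (sqdist_gt0 _ _ Hj); rewrite sqdist_dist2 in *.
  pose proof (dist2_ge0 (p j) (p l)); nra. }
exists (Rmin e m); split; [apply Rmin_pos; lra|intros z Hz].
pose proof (Rmin_l e m); pose proof (Rmin_r e m).
apply HD; split; [apply HeOmega; lra|intros j Hj Hzj].
destruct (classic (p j = p l)) as [Hjl|Hjl].
- rewrite Hzj, Hjl in Hz; pose proof (sqdist_diag (p l)) as Hdiag.
  rewrite sqdist_dist2 in Hdiag; nra.
- pose proof (Hmin j Hj Hjl); rewrite <- Hzj in *; lra.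
Qed.

Section Subsolution.

Variables (D : pt -> Prop) (u : pt -> R).
Hypothesis u_C2 : Ck 2 D u.
Hypothesis u_subsolution : forall x, D x -> exp (2 * u x) <= Lap u x.

Lemma subsolution_le_at_interior_max c Phi Phi' Phi'' a b z0 delta :
  radial_supersolution Phi Phi' Phi'' a b -> 0 < delta ->
  (forall w, Rabs (fst w - fst z0) < delta -> Rabs (snd w - snd z0) < delta ->
     D w /\ a < sqdist w c < b /\ u w - Phi (sqdist w c) <= u z0 - Phi (sqdist z0 c)) ->
  u z0 <= Phi (sqdist z0 c).
Proof.
intros Hsuper Hdelta Hbox.
destruct z0 as [x0 y0].
destruct u_C2 as (_ & Hd1 & (_ & Hdx & _ & _) & (_ & Hdy & _ & _)).
assert (Hcentre : Rabs (x0 - x0) < delta /\ Rabs (y0 - y0) < delta)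
  by (rewrite !Rminus_diag, Rabs_R0; lra).
destruct (Hbox (x0, y0) (proj1 Hcentre) (proj2 Hcentre)) as [HD0 [Hs0 _]].
destruct (Hsuper _ Hs0) as [_ [HPhi' Hsup]].
assert (Hxx : dx (dx u) (x0, y0) <=
  2 * Phi' (sqdist (x0, y0) c) + 4 * (x0 - fst c) ^ 2 * Phi'' (sqdist (x0, y0) c)).
{ apply (radial_line_max_second (fun t => u (t, y0)) (fun t => dx u (t, y0))
           (fun t => sqdist (t, y0) c) Phi Phi' Phi'' (fst c) ((y0 - snd c) ^ 2) x0 delta);
    [exact Hdelta|reflexivity| | |exact HPhi'].
  - intros t Ht.
    destruct (Hbox (t, y0) Ht (proj2 Hcentre)) as (HDt & Hst & Hmax).
    split; [|split; [apply Hsuper, Hst|exact Hmax]].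
    apply (Derive_correct (fun t' => u (t', y0))), (Hd1 (t, y0) HDt).
  - apply (Derive_correct (fun t => dx u (t, y0))), (Hdx _ HD0). }
assert (Hyy : dy (dy u) (x0, y0) <=
  2 * Phi' (sqdist (x0, y0) c) + 4 * (y0 - snd c) ^ 2 * Phi'' (sqdist (x0, y0) c)).
{ apply (radial_line_max_second (fun t => u (x0, t)) (fun t => dy u (x0, t))
           (fun t => sqdist (x0, t) c) Phi Phi' Phi'' (snd c) ((x0 - fst c) ^ 2) y0 delta);
    [exact Hdelta|intros t; unfold sqdist; simpl; ring| | |exact HPhi'].
  - intros t Ht.
    destruct (Hbox (x0, t) (proj1 Hcentre) Ht) as (HDt & Hst & Hmax).
    split; [|split; [apply Hsuper, Hst|exact Hmax]].
    apply (Derive_correct (fun t' => u (x0, t'))), (Hd1 (x0, t) HDt).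
  - apply (Derive_correct (fun t => dy u (x0, t))), (Hdy _ HD0). }
assert (Hlap : exp (2 * u (x0, y0)) <= exp (2 * Phi (sqdist (x0, y0) c))).
{ pose proof (u_subsolution _ HD0) as Hsub; unfold Lap in Hsub.
  replace (sqdist (x0, y0) c) with ((x0 - fst c) ^ 2 + (y0 - snd c) ^ 2) in Hsup at 1
    by reflexivity.
  lra. }
apply Rnot_lt_le; intros Hlt.
pose proof (exp_increasing (2 * Phi (sqdist (x0, y0) c)) (2 * u (x0, y0)) ltac:(lra)); lra.
Qed.

Lemma subsolution_le_on_annulus c Phi Phi' Phi'' a b lo hi x :
  radial_supersolution Phi Phi' Phi'' a b -> 0 <= lo -> a < lo -> hi < b ->
  (forall z, lo <= sqdist z c <= hi -> D z) ->
  lo <= sqdist x c <= hi ->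
  (forall z, sqdist z c = hi -> u z - Phi hi < u x - Phi (sqdist x c)) ->
  (0 < lo -> forall z, sqdist z c = lo -> u z - Phi lo < u x - Phi (sqdist x c)) ->
  u x <= Phi (sqdist x c).
Proof.
intros Hsuper Hlo Ha Hb HD Hx Hout Hin.
destruct (annulus_max_exists (fun z => u z - Phi (sqdist z c)) c lo hi)
  as [z0 [Hz0 Hmax]]; [lra| |].
{ intros z Hz.
  apply (continuous_minus u (fun z => Phi (sqdist z c))); [apply (proj1 u_C2), HD, Hz|].
  apply (continuous_comp (fun z => sqdist z c) Phi); [apply continuous_sqdist|].
  apply (@ex_derive_continuous R_AbsRing R_NormedModule).
  exists (Phi' (sqdist z c)); apply Hsuper; lra. }
pose proof (Hmax x Hx) as Hx0; simpl in Hx0.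
assert (Hz0_hi : sqdist z0 c < hi).
{ destruct (Rle_lt_or_eq_dec _ _ (proj2 Hz0)) as [H|H]; [exact H|].
  specialize (Hout z0 H); rewrite H in Hx0; lra. }
assert (Hbox : exists d, 0 < d /\ forall w,
  Rabs (fst w - fst z0) < d -> Rabs (snd w - snd z0) < d -> lo <= sqdist w c <= hi).
{ destruct (Rle_lt_or_eq_dec _ _ (proj1 Hz0)) as [Hlz|Hlz].
  - set (e := Rmin (sqdist z0 c - lo) (hi - sqdist z0 c)).
    pose proof (Rmin_l (sqdist z0 c - lo) (hi - sqdist z0 c)).
    pose proof (Rmin_r (sqdist z0 c - lo) (hi - sqdist z0 c)).
    destruct (continuous_box _ z0 e (continuous_sqdist c z0)) as [d [Hd Hw]];
      [apply Rmin_pos; lra|].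
    exists d; split; [exact Hd|intros w H1 H2].
    specialize (Hw w H1 H2); apply Rabs_def2 in Hw; unfold e in *; lra.
  - assert (Hlo0 : lo = 0).
    { destruct (Rle_lt_or_eq_dec _ _ Hlo) as [Hpos|]; [|lra].
      specialize (Hin Hpos z0 (eq_sym Hlz)); rewrite <- Hlz in Hx0; lra. }
    destruct (continuous_box _ z0 (hi - sqdist z0 c) (continuous_sqdist c z0))
      as [d [Hd Hw]]; [lra|].
    exists d; split; [exact Hd|intros w H1 H2].
    specialize (Hw w H1 H2); apply Rabs_def2 in Hw; pose proof (sqdist_ge0 w c); lra. }
destruct Hbox as [d [Hd Hbox]].
assert (Hz0_le : u z0 <= Phi (sqdist z0 c)).
{ apply (subsolution_le_at_interior_max c Phi Phi' Phi'' a b z0 d Hsuper Hd).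
  intros w H1 H2; specialize (Hbox w H1 H2).
  split; [apply HD, Hbox|split; [lra|apply Hmax, Hbox]]. }
lra.
Qed.

Lemma subsolution_le_in_disk x R0 : 0 < R0 ->
  (forall z, sqdist z x <= R0 ^ 2 -> D z) -> u x <= ln (2 / R0).
Proof.
intros HR HD.
destruct (annulus_max_exists u x 0 (R0 ^ 2)) as [zm [_ Hmax]];
  [split; [lra|apply pow2_ge_0]|intros z Hz; apply (proj1 u_C2), HD, Hz|].
destruct (exists_small_ln (u x - poincare_profile R0 0 - u zm + ln (2 * R0)) (R0 ^ 2 / 2))
  as [t [Ht Hlnt]]; [nra|].
replace (ln (2 / R0)) with (poincare_profile R0 (sqdist x x)).
2:{ rewrite sqdist_diag; unfold poincare_profile, Rdiv.
    assert (0 < / R0) by (apply Rinv_0_lt_compat; lra).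
    rewrite Rminus_0_r, !ln_mult, ln_Rinv, ln_pow by lra; simpl; ring. }
apply (subsolution_le_on_annulus x (poincare_profile R0) _ _ (-1) (R0 ^ 2) 0 (R0 ^ 2 - t) x
         (poincare_profile_supersolution R0 (-1) HR)); try lra.
- intros z Hz; apply HD; lra.
- rewrite sqdist_diag; lra.
- intros z Hz; assert (Hzm : u z <= u zm) by (apply Hmax; lra).
  rewrite sqdist_diag; unfold poincare_profile in *.
  replace (R0 ^ 2 - (R0 ^ 2 - t)) with t by ring; lra.
Qed.

Lemma subsolution_le_near_puncture p rho z :
  (forall w, 0 < dist2 w p < 2 * rho -> D w) -> 0 < dist2 z p < rho ->
  u z <= ln 4 - ln (dist2 z p).
Proof.
intros HD Hz.
replace (ln 4 - ln (dist2 z p)) with (ln (2 / (dist2 z p / 2))).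
2:{ replace (2 / (dist2 z p / 2)) with (4 * / dist2 z p) by (field; lra).
    rewrite ln_mult, ln_Rinv by (try apply Rinv_0_lt_compat; lra); ring. }
apply subsolution_le_in_disk; [lra|].
intros w Hw; apply HD.
assert (Hwz : dist2 w z <= dist2 z p / 2).
{ rewrite sqdist_dist2 in Hw; pose proof (dist2_ge0 w z); nra. }
pose proof (dist2_triangle z w p); pose proof (dist2_triangle w z p).
rewrite (dist2_sym z w) in *; lra.
Qed.

Lemma subsolution_le_cusp_profile p rho eps x :
  0 < rho < 1 -> 0 < eps ->
  (forall z, 0 < dist2 z p < 2 * rho -> D z) ->
  0 < sqdist x p < rho ^ 2 ->
  u x <= cusp_profile rho eps (sqdist x p).
Proof.
intros Hrho Heps HD Hx.
assert (HDann : forall z, 0 < sqdist z p <= rho ^ 2 -> D z).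
{ intros z Hz; apply HD; rewrite sqdist_dist2 in Hz; pose proof (dist2_ge0 z p); nra. }
set (s0 := sqdist x p) in *.
set (L0 := log_ratio rho s0).
assert (HL0 : 0 < L0) by (apply log_ratio_pos; lra).
set (F := u x - cusp_profile rho eps s0).
destruct (annulus_max_exists u p s0 (rho ^ 2)) as [zm [_ Hmax]];
  [lra|intros z Hz; apply (proj1 u_C2), HDann; lra|].
destruct (exists_small_ln (F - u zm) (L0 / 2)) as [eta [Heta Hlneta]]; [lra|].
destruct (exists_linear_beats_ln eps (ln 4 - F) L0 Heps) as [Lin [HLin Hbeat]].
assert (Hs0 : cusp_level rho L0 = s0) by (apply cusp_level_log_ratio; lra).
assert (Hrho2 : cusp_level rho 0 = rho ^ 2) by (apply cusp_level_0; lra).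
pose proof (cusp_level_lt rho Lin L0 HLin) as Hlo.
pose proof (cusp_level_lt rho L0 eta ltac:(lra)) as Hhi.
pose proof (cusp_level_lt rho eta 0 ltac:(lra)) as Hhi'.
pose proof (exp_pos (2 * (ln rho - Lin))) as Hlo0; fold (cusp_level rho Lin) in Hlo0.
assert (Hlnrho : ln rho < 0) by (rewrite <- ln_1; apply ln_increasing; lra).
apply (subsolution_le_on_annulus p _ _ _ 0 (rho ^ 2)
         (cusp_level rho Lin) (cusp_level rho eta) x
         (cusp_profile_supersolution rho eps ltac:(lra) ltac:(lra))); fold s0; try lra.
- intros z Hz; apply HDann; lra.
- intros z Hz.
  assert (Hzm : u z <= u zm) by (apply Hmax; lra).
  rewrite cusp_profile_level; fold F; nra.
- intros _ z Hz.
  assert (Hdz : dist2 z p = sqrt (cusp_level rho Lin)) by (unfold dist2; f_equal; exact Hz).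
  assert (Huz : u z <= ln 4 - ln (dist2 z p)).
  { apply (subsolution_le_near_puncture p rho z HD).
    rewrite Hdz; split; [apply sqrt_lt_R0; lra|].
    rewrite <- (sqrt_pow2 rho) at 2 by lra; apply sqrt_lt_1_alt; lra. }
  rewrite Hdz, ln_sqrt, ln_cusp_level in Huz by lra.
  rewrite cusp_profile_level; fold F; lra.
Qed.

Lemma subsolution_le_cusp p rho x :
  0 < rho < 1 -> (forall z, 0 < dist2 z p < 2 * rho -> D z) -> 0 < dist2 x p < rho ->
  u x <= - ln (dist2 x p) - ln (ln rho - ln (dist2 x p)).
Proof.
intros Hrho HD Hx.
assert (Hs : 0 < sqdist x p < rho ^ 2) by (rewrite sqdist_dist2; nra).
assert (Hln : ln (dist2 x p) = ln (sqdist x p) / 2) by (apply ln_sqrt; lra).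
assert (HL : 0 < log_ratio rho (sqdist x p)) by (apply log_ratio_pos; lra).
apply Rle_plus_epsilon; intros e He.
pose proof (subsolution_le_cusp_profile p rho (e / log_ratio rho (sqdist x p)) x Hrho
              ltac:(apply Rdiv_lt_0_compat; lra) HD Hs) as Hu.
unfold cusp_profile in Hu.
replace (e / log_ratio rho (sqdist x p) * log_ratio rho (sqdist x p)) with e in Hu
  by (field; lra).
unfold log_ratio in Hu; rewrite <- Hln in Hu; exact Hu.
Qed.

Lemma ln_cusp_bounded_near_puncture p rho0 r d1 :
  ~ D p -> 0 < rho0 -> (forall z, 0 < dist2 z p < rho0 -> D z) -> 0 < r -> 0 < d1 ->
  (forall x, D x -> dist2 x p < d1 -> - ln (- r * dist2 x p * ln (dist2 x p / r)) <= u x) ->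
  exists d, 0 < d /\ forall x, D x -> dist2 x p < d ->
    Rabs (u x + ln (- dist2 x p * ln (dist2 x p))) < Rabs (ln r) + ln 2 + 1.
Proof.
intros Hp Hrho0 HD Hr Hd1 Hlow.
set (rho := Rmin (rho0 / 2) (1 / 2)).
assert (Hrho : 0 < rho <= 1 / 2) by (split; [apply Rmin_pos|apply Rmin_r]; lra).
assert (Hrho2 : 2 * rho <= rho0) by (pose proof (Rmin_l (rho0 / 2) (1 / 2)); unfold rho; lra).
assert (Hr' : 0 < / r) by (apply Rinv_0_lt_compat, Hr).
exists (Rmin (Rmin d1 (rho ^ 2)) (Rmin r (/ r))).
pose proof (Rmin_l (Rmin d1 (rho ^ 2)) (Rmin r (/ r))).
pose proof (Rmin_r (Rmin d1 (rho ^ 2)) (Rmin r (/ r))).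
pose proof (Rmin_l d1 (rho ^ 2)); pose proof (Rmin_r d1 (rho ^ 2)).
pose proof (Rmin_l r (/ r)); pose proof (Rmin_r r (/ r)).
split; [repeat apply Rmin_pos; nra|intros x HDx Hx].
assert (Hx0 : 0 < dist2 x p).
{ assert (Hxp : x <> p) by (intros ->; exact (Hp HDx)).
  pose proof (sqdist_gt0 x p Hxp); rewrite sqdist_dist2 in *; pose proof (dist2_ge0 x p); nra. }
assert (Hup : u x + ln (- dist2 x p * ln (dist2 x p)) <= ln 2).
{ apply (ln_cusp_upper rho); [lra|nra|].
  apply (subsolution_le_cusp p rho x); [lra| |nra].
  intros z Hz; apply HD; lra. }
assert (Hdown : - ln r - ln 2 <= u x + ln (- dist2 x p * ln (dist2 x p))).
{ apply ln_cusp_lower; try nra; apply Hlow; [exact HDx|lra]. }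
assert (0 < ln 2) by (rewrite <- ln_1; apply ln_increasing; lra).
pose proof (Rle_abs (ln r)); pose proof (Rle_abs (- ln r)); rewrite Rabs_Ropp in *.
apply Rabs_def1; lra.
Qed.

End Subsolution.

Theorem proposition5p2
  (Omega : pt -> Prop) (n : nat) (p : nat -> pt) (u : pt -> R)
  (Hdom : plane_domain Omega) (Hbdd : bounded_set Omega) (Hsm : smooth_boundary Omega)
  (Hp : forall l, (l < n)%nat -> Omega (p l))
  (D : pt -> Prop)
  (HD : forall x, D x <-> Omega x /\ forall l, (l < n)%nat -> x <> p l)
  (Hreg : Ck 2 D u)
  (Heq : forall x, D x -> Lap u x = exp (2 * u x))
  (Hbd : forall q, bdry Omega q -> tends_pinfty_at D u q)
  (Hpt : forall l, (l < n)%nat -> tends_pinfty_at D u (p l))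
  (Hlow : forall l, (l < n)%nat ->
     exists r, 0 < r /\ (forall x, Omega x -> dist2 x (p l) < r) /\
       exists d, 0 < d /\ forall x, D x -> dist2 x (p l) < d ->
         - ln (- r * dist2 x (p l) * ln (dist2 x (p l) / r)) <= u x) :
  exists C, forall l, (l < n)%nat ->
    exists d, 0 < d /\ forall x, D x -> dist2 x (p l) < d ->
      Rabs (u x + ln (- dist2 x (p l) * ln (dist2 x (p l)))) < C.
Proof.
apply finite_common_bound.
- intros l C C' HCC' [d [Hd Hbound]].
  exists d; split; [exact Hd|intros x HDx Hx; specialize (Hbound x HDx Hx); lra].
- intros l Hl.
  destruct (punctured_disk_in_domain Omega D n p l (proj1 Hdom) (Hp l Hl) HD)
    as [rho0 [Hrho0 Hpunct]].
  destruct (Hlow l Hl) as [r [Hr [_ [d1 [Hd1 Hlow_l]]]]].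
  eexists; apply (ln_cusp_bounded_near_puncture D u Hreg
                    (fun x Hx => Req_le _ _ (eq_sym (Heq x Hx))) (p l) rho0 r d1);
    try assumption.
  intros HDp; apply HD in HDp; exact (proj2 HDp l Hl eq_refl).
Qed.
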